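(* Let $n\ge 3$ and let $M\in\mathbb{R}^{n\times n}$ be a nonnegative irreducible matrix. Then (i) $\lim_{\ell\to\infty}\mathcal{E}^\ell(M)=\mathcal{E}(M)$ (entrywise); and (ii) the sequence $(\mathcal{E}^\ell(M))_{\ell\ge 1}$ is entrywise nondecreasing: $\mathcal{E}^\ell(M)\le\mathcal{E}^{\ell+1}(M)$ entrywise for every $\ell\ge 1$.
   Context: Let $N=\{1,\dots,n\}$ and let $G$ be the directed graph on $N$ with an edge $i\to j$ iff $m_{ij}>0$ (strongly connected since $M$ is irreducible); $\delta_{ij}$ is the directed graph distance from $i$ to $j$ in $G$ ($\delta_{ii}=0$). For $M_{RC}$ the submatrix with rows in $R$ and columns in $C$, $\bar S=N\setminus S$, and $\rho(M)$ the spectral radius, the isoradial reduction is $\mathcal{I}_S(M)=M_{SS}-M_{S\bar S}(M_{\bar S\bar S}-\rho(M)I)^{-1}M_{\bar S S}$ (rows/columns indexed by $S$), and the effective transition matrix is $\mathcal{E}(M)=[\varepsilon_{ij}]$ with $\varepsilon_{ij}=\mathcal{I}_{\{i,j\}}(M)_{ij}$ for $i\ne j$ and $\varepsilon_{ii}=\sum_{k\ne i}\mathcal{I}_{\{i,k\}}(M)_{ii}$. For $i\neq j$ and integer $\ell\ge1$ let $\Gamma^\ell_{ij}=\{k\in N:\delta_{ik}+\delta_{kj}\le\ell\text{ and }\delta_{jk}+\delta_{ki}\le\ell\}\cup\{i,j\}$, let $S=\{i,j\}$ and $\tilde S=\Gamma^\ell_{ij}\setminus S$. The $\ell$-step approximation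 is $$\mathcal{I}^\ell_S(M)=M_{SS}+\rho(M)^{-1}M_{S\tilde S}\Big(\sum_{k=0}^{\ell}\big(\rho(M)^{-1}M_{\tilde S\tilde S}\big)^k\Big)M_{\tilde S S}$$ (the second term being zero if $\tilde S=\emptyset$), with rows/columns indexed by $S$, and $\mathcal{E}^\ell(M)=[\varepsilon^\ell_{ij}]$ where $\varepsilon^\ell_{ij}=\mathcal{I}^\ell_{\{i,j\}}(M)_{ij}$ for $i\ne j$ and $\varepsilon^\ell_{ii}=\sum_{k\ne i}\mathcal{I}^\ell_{\{i,k\}}(M)_{ii}$. *)

From HB Require Import structures.
From mathcomp Require Import all_boot all_order all_algebra.
Set Implicit Arguments. Unset Strict Implicit. Unset Printing Implicit Defensive.
Import Order.TTheory GRing.Theory Num.Theory.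
Local Open Scope ring_scope.

Section Defs.
Variables (C : archiClosedFieldType) (n : nat).
Implicit Types (M : 'M[C]_n) (S T : {set 'I_n}).

Definition walk M (k : nat) (i j : 'I_n) : bool :=
  [exists f : {ffun 'I_k.+1 -> 'I_n},
     [&& f ord0 == i, f ord_max == j &
         [forall t : 'I_k, 0 < M (f (widen_ord (leqnSn k) t)) (f (lift ord0 t))]]].

Definition irreducible M : Prop := forall i j : 'I_n, exists k, walk M k i j.

(* directed graph distance: least k with a walk of length k (a shortest walk,
   when it exists, has length < n; returns n if j is unreachable) *)
Definition dist M (i j : 'I_n) : nat := find (fun k => walk M k i j) (iota 0 n).

Definition spectral_radius M (rho : C) : Prop :=
  (exists2 l, eigenvalue M l & `|l| = rho) /\ (forall l, eigenvalue M l -> `|l| <= rho).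

(* submatrix M_{RT}, rows/columns of a set listed in increasing order *)
Definition subM M S T : 'M[C]_(#|S|, #|T|) :=
  \matrix_(a, b) M (enum_val a) (enum_val b).

Definition iso M (rho : C) S : 'M[C]_#|S| :=
  subM M S S - subM M S (~: S) *m invmx (subM M (~: S) (~: S) - rho%:M)
                *m subM M (~: S) S.

Definition Gamma M (l : nat) (i j : 'I_n) : {set 'I_n} :=
  [set k | ((dist M i k + dist M k j <= l)%N && (dist M j k + dist M k i <= l)%N)]
  :|: [set i; j].

Definition iso_l M (rho : C) (l : nat) (i j : 'I_n) : 'M[C]_#|[set i; j]| :=
  let S := [set i; j] in
  let St := Gamma M l i j :\: S in
  subM M S S + rho^-1 *: (subM M S St
     *m (\sum_(k < l.+1) (rho^-1 *: subM M St St) ^+ k) *m subM M St S).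

Definition at2 (i j a b : 'I_n) (Ha : a \in [set i; j]) (Hb : b \in [set i; j])
  (A : 'M[C]_#|[set i; j]|) : C := A (enum_rank_in Ha a) (enum_rank_in Hb b).

Definition eff M (rho : C) : 'M[C]_n :=
  \matrix_(i, j)
    if i == j then \sum_(k | k != i) at2 (set21 i k) (set21 i k) (iso M rho [set i; k])
    else at2 (set21 i j) (set22 i j) (iso M rho [set i; j]).

Definition eff_l M (rho : C) (l : nat) : 'M[C]_n :=
  \matrix_(i, j)
    if i == j then \sum_(k | k != i) at2 (set21 i k) (set21 i k) (iso_l M rho l i k)
    else at2 (set21 i j) (set22 i j) (iso_l M rho l i j).

End Defs.

From HB Require Import structures.
From mathcomp Require Import all_boot all_order all_algebra.
From mathcomp Require Import ring.
Set Implicit Arguments. Unset Strict Implicit. Unset Printing Implicit Defensive.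
Import Order.TTheory GRing.Theory Num.Theory.
Local Open Scope ring_scope.

(* Write [S = {i, j}] and [S' = ~: S]. Both statements reduce to the 2 x 2
   matrices [I^l_S(M)], one entry at a time.

   Once [l >= 2n], [Gamma^l_ij] is the whole vertex set, and a
   truncated Neumann series gives
     [I^l_S(M) = I_S(M) + M_SS' (rho^-1 M_S'S')^(l+1) (M_S'S' - rho)^-1 M_S'S].
   A Perron-Frobenius argument (subinvariant nonnegative vectors, smoothed by
   the positive matrix [sum_(k <= N) M^k] of the irreducible [M]) shows that
   every eigenvalue of the proper principal submatrix [M_S'S'] has modulus
   [< rho]; a power bound derived from Cayley-Hamilton then makes the error
   term decay geometrically.

   Written with full-size matrices and the 0/1 indicator of the
   intermediate vertex set, [I^l_S(M)] is a polynomial with nonnegative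
   coefficients in [M], [rho^-1] and that indicator; the vertex set grows with
   [l] and the truncated series gains a term, so each entry is nondecreasing. *)

Section NumFieldFacts.
Variable R : numFieldType.

Lemma ler_sum_term (I : finType) (F : I -> R) (i : I) :
  (forall j, 0 <= F j) -> F i <= \sum_j F j.
Proof.
by move=> F0; rewrite (bigD1 i) //= lerDl; apply: sumr_ge0 => j _.
Qed.

Lemma sumr_gt0_term (I : finType) (F : I -> R) (i : I) :
  (forall j, 0 <= F j) -> 0 < F i -> 0 < \sum_j F j.
Proof. by move=> F0 Fi; apply: lt_le_trans Fi (ler_sum_term _ F0). Qed.

Lemma pos_ratio_bound (I : finType) (y w : I -> R) :
  (forall b, 0 <= y b) -> (forall b, 0 < w b) ->
  exists2 d, 0 < d & forall b, d * y b <= w b.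
Proof.
move=> y0 w0; set T := 1 + \sum_b y b / w b.
have T0 : 0 < T.
  apply: lt_le_trans ltr01 _; rewrite lerDl sumr_ge0 // => b _.
  by rewrite divr_ge0 // ltW.
exists T^-1 => [|b]; first by rewrite invr_gt0.
rewrite mulrC ler_pdivrMr // -ler_pdivrMl //.
apply: le_trans (_ : \sum_b y b / w b <= T); last by rewrite lerDr.
by rewrite mulrC; apply: ler_sum_term => b'; apply: divr_ge0 (y0 b') (ltW (w0 b')).
Qed.

Lemma bernoulli (h : R) (k : nat) : 0 <= h -> 1 + k%:R * h <= (1 + h) ^+ k.
Proof.
move=> h0; elim: k => [|k IH]; first by rewrite mul0r addr0 expr0.
rewrite exprSr; apply: le_trans (ler_wpM2r (addr_ge0 ler01 h0) IH).
have -> : (1 + k%:R * h) * (1 + h) = 1 + k.+1%:R * h + k%:R * (h * h).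
  by rewrite mulrSr; ring.
by rewrite lerDl !mulr_ge0.
Qed.

(* Finitely many reals below [rho > 0] stay below a common [r < rho]; this is
   what turns "every eigenvalue is smaller than rho" into a uniform gap. *)
Lemma common_bound_below (s : seq R) (rho : R) : 0 < rho ->
  (forall x, x \in s -> 0 <= x < rho) ->
  exists r, [/\ 0 < r, r < rho & forall x, x \in s -> x < r].
Proof.
move=> rho0; elim: s => [|x s IH] Hs.
  by exists (rho / 2); split; rewrite ?divr_gt0 // ltr_pdivrMr // ltr_pMr ?ltr1n.
have /andP [x0 xrho] := Hs x (mem_head x s).
have [r [r0 rrho Hr]] : exists r, [/\ 0 < r, r < rho & forall y, y \in s -> y < r].
  by apply: IH => y ys; apply: Hs; rewrite inE ys orbT.
have [xr|rx] := real_ltP (ger0_real x0) (gtr0_real r0).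
  by exists r; split=> // y; rewrite inE => /orP [/eqP -> //|]; apply: Hr.
have [xm mrho] := midf_lt xrho.
exists ((x + rho) / 2); split => //; first exact: le_lt_trans x0 xm.
move=> y; rewrite inE => /orP [/eqP -> //|ys].
exact: lt_trans (lt_le_trans (Hr y ys) rx) xm.
Qed.

Lemma linear_recurrence_bound (u g : nat -> R) (z r K0 K : R) :
  `|z| < r -> 0 <= K -> `|u 0%N| <= K0 ->
  (forall k, u k.+1 = g k + z * u k) -> (forall k, `|g k| <= K * r ^+ k) ->
  forall k, `|u k| <= (K0 + K / (r - `|z|)) * r ^+ k.
Proof.
move=> zr K_ge0 u0 rec gK; set d := r - `|z|.
have d0 : 0 < d by rewrite subr_gt0.
have K0_ge0 : 0 <= K0 := le_trans (normr_ge0 _) u0.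
have r0 : 0 < r := le_lt_trans (normr_ge0 z) zr.
elim=> [|k IH].
  by rewrite expr0 mulr1; apply: le_trans u0 _; rewrite lerDl divr_ge0 // ltW.
rewrite rec; apply: le_trans (ler_normD _ _) _; rewrite normrM.
apply: le_trans (lerD (gK k) (ler_wpM2l (normr_ge0 z) IH)) _.
rewrite mulrA -mulrDl exprS mulrA [_ * r]mulrC.
apply: ler_wpM2r; first by rewrite exprn_ge0 // ltW.
have -> : r * (K0 + K / d) = K + `|z| * (K0 + K / d) + d * K0.
  rewrite /d; field; exact: lt0r_neq0.
by rewrite lerDl mulr_ge0 // ltW.
Qed.

End NumFieldFacts.

Section Sequences.
Variable R : numFieldType.

Definition converges (u : nat -> R) (a : R) : Prop :=
  forall eps, 0 < eps -> exists L : nat, forall l, (L <= l)%N -> `|u l - a| < eps.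

Lemma converges_eq (u v : nat -> R) (a : R) :
  (forall l, u l = v l) -> converges v a -> converges u a.
Proof.
by move=> uv Hv eps /Hv [L HL]; exists L => l /HL; rewrite uv.
Qed.

Lemma converges_cst (a : R) : converges (fun _ => a) a.
Proof. by move=> eps e0; exists 0%N => l _; rewrite subrr normr0. Qed.

Lemma convergesD (u v : nat -> R) (a b : R) : converges u a -> converges v b ->
  converges (fun l => u l + v l) (a + b).
Proof.
move=> Hu Hv eps e0; have e2 : 0 < eps / 2 by rewrite divr_gt0.
have [L1 H1] := Hu _ e2; have [L2 H2] := Hv _ e2.
exists (maxn L1 L2) => l; rewrite geq_max => /andP [l1 l2].
rewrite (_ : u l + v l - (a + b) = (u l - a) + (v l - b)); last by ring.
apply: le_lt_trans (ler_normD _ _) _.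
by rewrite [eps]splitr ltrD ?H1 ?H2.
Qed.

Lemma converges_sum (I : Type) (s : seq I) (P : pred I)
    (u : I -> nat -> R) (a : I -> R) :
  (forall i, P i -> converges (u i) (a i)) ->
  converges (fun l => \sum_(i <- s | P i) u i l) (\sum_(i <- s | P i) a i).
Proof.
move=> Hu; apply: (@converges_eq _ (fun l => \sum_(i <- s) if P i then u i l else 0)).
  by move=> l; rewrite big_mkcond.
rewrite big_mkcond; elim: s => [|i s IH].
  by apply: (@converges_eq _ (fun=> 0)) => [l|]; rewrite !big_nil //; apply: converges_cst.
apply: (@converges_eq _ (fun l => (if P i then u i l else 0) +
                                  \sum_(j <- s) if P j then u j l else 0)).
  by move=> l; rewrite big_cons.
rewrite big_cons; apply: convergesD => //.
by case: ifP => Pi; [apply: Hu | apply: converges_cst].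
Qed.

End Sequences.

Section ArchimedeanFacts.
Variable R : archiNumFieldType.

Lemma expr_unbounded (s c : R) : 1 < s -> 0 <= c -> exists k : nat, c < s ^+ k.
Proof.
move=> s1 c0; set h := s - 1; have h0 : 0 < h by rewrite subr_gt0.
have ch := archi_boundP (divr_ge0 c0 (ltW h0)); rewrite ltr_pdivrMr // in ch.
exists (Num.bound (c / h)); rewrite (_ : s = 1 + h); last by rewrite /h addrC subrK.
by apply: lt_le_trans (bernoulli _ (ltW h0)); apply: lt_le_trans ch _; rewrite lerDr.
Qed.

Lemma converges_geometric (u : nat -> R) (a K q : R) (L0 : nat) :
  0 <= K -> 0 <= q -> q < 1 ->
  (forall l, (L0 <= l)%N -> `|u l - a| <= K * q ^+ l) -> converges u a.
Proof.
move=> K0 q0 q1 Hu eps e0; set q' := (q + 1) / 2.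
have [qq' q'1] := midf_lt q1; have q'0 : 0 < q' := le_lt_trans q0 qq'.
have q'V : 1 < q'^-1 by rewrite invf_gt1.
have [k Hk] := expr_unbounded q'V (divr_ge0 K0 (ltW e0)).
exists (maxn L0 k) => l; rewrite geq_max => /andP [Ll kl].
apply: le_lt_trans (Hu l Ll) _; apply: le_lt_trans (_ : K * q ^+ l <= K * q' ^+ k) _.
  apply: ler_wpM2l => //; apply: le_trans (ler_wiXn2l (ltW q'0) (ltW q'1) kl).
  by rewrite lerXn2r // ?nnegrE // ltW.
have q'k : 0 < q' ^+ k by rewrite exprn_gt0.
rewrite ltr_pdivrMr // in Hk.
by rewrite -ltr_pdivlMr // -exprVn mulrC.
Qed.

End ArchimedeanFacts.

Section MatrixPowers.
Variable C : numClosedFieldType.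

Lemma exprZ_mx (m : nat) (c : C) (A : 'M[C]_m) (k : nat) :
  (c *: A) ^+ k = c ^+ k *: A ^+ k.
Proof.
elim: k => [|k IH]; first by rewrite !expr0 scale1r.
by rewrite !exprSr IH -!mulmxE -scalemxAl -scalemxAr scalerA.
Qed.

Lemma char_poly_split (m : nat) (A : 'M[C]_m) :
  exists rs : seq C, char_poly A = \prod_(z <- rs) ('X - z%:P) /\
                     forall l, eigenvalue A l = (l \in rs).
Proof.
have [rs Hrs] := closed_field_poly_normal (char_poly A).
rewrite (monicP (char_poly_monic A)) scale1r in Hrs.
by exists rs; split=> // l; rewrite eigenvalue_root_char Hrs root_prod_XsubC.
Qed.

(* If [p(A) prod_(z <- rs) (A - z)] vanishes and every [z] has modulus below
   [r], then the matrices [A^k p(A)] grow at most like [r^k]: each factor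
   [A - z] is peeled off by [linear_recurrence_bound]. *)
Lemma annihilated_power_bound (m : nat) (A : 'M[C]_m.+1) (r : C) (rs : seq C)
    (p : {poly C}) :
  (forall z, z \in rs -> `|z| < r) ->
  horner_mx A (p * \prod_(z <- rs) ('X - z%:P)) = 0 ->
  exists2 K, 0 <= K & forall k a b, `|horner_mx A ('X^k * p) a b| <= K * r ^+ k.
Proof.
elim: rs p => [|z rs IH] p Hrs.
  rewrite big_nil mulr1 => hp; exists 0 => // k a b.
  by rewrite rmorphM /= hp mulr0 mxE normr0 mul0r.
rewrite big_cons mulrA => hp.
have [K' K'0 HK'] : exists2 K', 0 <= K' &
    forall k a b, `|horner_mx A ('X^k * (p * ('X - z%:P))) a b| <= K' * r ^+ k.
  by apply: IH hp => y ys; apply: Hrs; rewrite inE ys orbT.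
pose F k := horner_mx A ('X^k * p).
set K0 := \sum_a \sum_b `|F 0%N a b|.
exists (K0 + K' / (r - `|z|)) => [|k a b].
  have zr : 0 < r - `|z| by rewrite subr_gt0 Hrs ?mem_head.
  apply: addr_ge0; last by rewrite divr_ge0 // ltW.
  by do 2![apply: sumr_ge0 => ? _].
apply: (@linear_recurrence_bound _ (fun k => F k a b)
          (fun k => horner_mx A ('X^k * (p * ('X - z%:P))) a b)) => //.
- by rewrite Hrs ?mem_head.
- have Fab : `|F 0%N a b| <= \sum_b' `|F 0%N a b'| by apply: ler_sum_term.
  apply: le_trans Fab _; rewrite /K0.
  apply: (@ler_sum_term _ _ (fun a' => \sum_b' `|F 0%N a' b'|)) => a'.
  by apply: sumr_ge0.
- move=> j /=.
  have -> : F j.+1 = horner_mx A ('X^j * (p * ('X - z%:P))) + z%:M * F j.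
    rewrite /F -(horner_mx_C A) -rmorphM -rmorphD; congr (horner_mx A _).
    by rewrite exprS; ring.
  by rewrite mxE -mulmxE mul_scalar_mx mxE.
Qed.

(* If every eigenvalue of [A] has modulus below [r], then [|A^k| <= K r^k]
   entrywise (Cayley-Hamilton and [annihilated_power_bound] with [p = 1]). *)
Lemma power_bound (m : nat) (A : 'M[C]_m) (r : C) :
  (forall l, eigenvalue A l -> `|l| < r) ->
  exists2 K, 0 <= K & forall k a b, `|(A ^+ k) a b| <= K * r ^+ k.
Proof.
case: m A => [|m] A Heig; first by exists 0 => // k [].
have [rs [Hchar Heigrs]] := char_poly_split A.
have Hrs : forall z, z \in rs -> `|z| < r by move=> z zs; apply: Heig; rewrite Heigrs.
have Hann : horner_mx A (1 * \prod_(z <- rs) ('X - z%:P)) = 0.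
  by rewrite mul1r -Hchar Cayley_Hamilton.
have [K K0 HK] := annihilated_power_bound Hrs Hann.
by exists K => // k a b; move: (HK k a b); rewrite mulr1 rmorphXn /= horner_mx_X.
Qed.

Lemma spectral_gap (m : nat) (A : 'M[C]_m) (rho : C) : 0 < rho ->
  (forall l, eigenvalue A l -> `|l| < rho) ->
  exists r, [/\ 0 < r, r < rho & forall l, eigenvalue A l -> `|l| < r].
Proof.
move=> rho0 Heig; have [rs [_ Heigrs]] := char_poly_split A.
have [|r [r0 rrho Hr]] := @common_bound_below _ (map Num.norm rs) rho rho0.
  by move=> x /mapP [z zs ->]; rewrite normr_ge0 Heig ?Heigrs.
by exists r; split=> // l; rewrite Heigrs => ls; apply/Hr/map_f.
Qed.

Lemma scaled_power_decay (m : nat) (A : 'M[C]_m) (rho : C) : 0 < rho ->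
  (forall l, eigenvalue A l -> `|l| < rho) ->
  exists K q, [/\ 0 <= K, 0 <= q, q < 1 &
    forall k a b, `|((rho^-1 *: A) ^+ k) a b| <= K * q ^+ k].
Proof.
move=> rho0 Heig; have [r [r0 rrho Hr]] := spectral_gap rho0 Heig.
have [K K0 HK] := power_bound Hr.
exists K, (r / rho); split => //; first by rewrite divr_ge0 ?ltW.
  by rewrite ltr_pdivrMr // mul1r.
move=> k a b; rewrite exprZ_mx mxE normrM normrX normfV (gtr0_norm rho0).
rewrite exprMn exprVn mulrCA mulrC mulrA [_ * K]mulrC.
by apply: ler_wpM2r; [rewrite invr_ge0 exprn_ge0 // ltW | exact: HK].
Qed.

Lemma neumann_partial_sum (m : nat) (A : 'M[C]_m) (rho : C) (l : nat) :
  0 < rho -> (A - rho%:M) \in unitmx ->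
  rho^-1 *: \sum_(k < l.+1) (rho^-1 *: A) ^+ k
    = ((rho^-1 *: A) ^+ l.+1 - 1) *m invmx (A - rho%:M).
Proof.
move=> rho0 uA; set B := rho^-1 *: A.
have AB : A - rho%:M = rho *: (B - 1).
  by rewrite scalerBr scalerA divff ?lt0r_neq0 // scale1r scalemx1.
have telescope : (\sum_(k < l.+1) B ^+ k) * (B - 1) = B ^+ l.+1 - 1.
  rewrite mulr_suml (eq_bigr (fun k : 'I_l.+1 => B ^+ k.+1 - B ^+ k)); last first.
    by move=> k _; rewrite mulrBr mulr1 -exprSr.
  by rewrite -(big_mkord xpredT (fun k => B ^+ k.+1 - B ^+ k)) telescope_sumr // expr0.
rewrite -[LHS](mulmxK uA); congr (_ *m _).
by rewrite AB -scalemxAl -scalemxAr scalerA mulVf ?lt0r_neq0 // scale1r mulmxE.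
Qed.

End MatrixPowers.

Section EntrywiseOrder.
Variable R : numDomainType.

Definition mx_nonneg (m p : nat) (X : 'M[R]_(m, p)) : Prop := forall a b, 0 <= X a b.

(* [mx_le0 X Y] : [0 <= X <= Y] entrywise; on such pairs the matrix
   operations are monotone. *)
Definition mx_le0 (m p : nat) (X Y : 'M[R]_(m, p)) : Prop :=
  forall a b, 0 <= X a b <= Y a b.

Lemma nonzero_entry (m : nat) (v : 'rV[R]_m) : v != 0 -> exists j, v 0 j != 0.
Proof.
move=> v0; apply/existsP; apply: contraNT v0 => /existsPn v_eq0.
by apply/eqP/matrixP => i j; rewrite (ord1 i) mxE; apply/eqP/negPn/v_eq0.
Qed.

Lemma mx_nonneg_mul (m p q : nat) (X : 'M[R]_(m, p)) (Y : 'M[R]_(p, q)) :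
  mx_nonneg X -> mx_nonneg Y -> mx_nonneg (X *m Y).
Proof. by move=> X0 Y0 a b; rewrite mxE sumr_ge0 // => c _; rewrite mulr_ge0. Qed.

Lemma mx_nonneg_exp (m : nat) (X : 'M[R]_m) (k : nat) :
  mx_nonneg X -> mx_nonneg (X ^+ k).
Proof.
move=> X0; elim: k => [|k IH]; first by move=> a b; rewrite expr0 mxE ler0n.
by rewrite exprSr -mulmxE; apply: mx_nonneg_mul.
Qed.

Lemma mx_le0_refl (m p : nat) (X : 'M[R]_(m, p)) : mx_nonneg X -> mx_le0 X X.
Proof. by move=> X0 a b; rewrite X0 lexx. Qed.

Lemma mx_le0_add (m p : nat) (X X' Y Y' : 'M[R]_(m, p)) :
  mx_le0 X X' -> mx_le0 Y Y' -> mx_le0 (X + Y) (X' + Y').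
Proof.
move=> XX' YY' a b; have /andP [X0 XX] := XX' a b; have /andP [Y0 YY] := YY' a b.
by rewrite !mxE addr_ge0 // lerD.
Qed.

Lemma mx_le0_scale (m p : nat) (c : R) (X Y : 'M[R]_(m, p)) :
  0 <= c -> mx_le0 X Y -> mx_le0 (c *: X) (c *: Y).
Proof.
by move=> c0 XY a b; have /andP [X0 XY'] := XY a b; rewrite !mxE mulr_ge0 // ler_wpM2l.
Qed.

Lemma mx_le0_mul (m p q : nat) (X X' : 'M[R]_(m, p)) (Y Y' : 'M[R]_(p, q)) :
  mx_le0 X X' -> mx_le0 Y Y' -> mx_le0 (X *m Y) (X' *m Y').
Proof.
move=> XX' YY' a b; rewrite !mxE; apply/andP; split.
  by apply: sumr_ge0 => c _; have /andP [? _] := XX' a c; have /andP [? _] := YY' c b;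
     rewrite mulr_ge0.
apply: ler_sum => c _; have /andP [? ?] := XX' a c; have /andP [? ?] := YY' c b.
exact: ler_pM.
Qed.

Lemma mx_le0_exp (m : nat) (X Y : 'M[R]_m) (k : nat) :
  mx_le0 X Y -> mx_le0 (X ^+ k) (Y ^+ k).
Proof.
move=> XY; elim: k => [|k IH]; first by apply: mx_le0_refl => a b; rewrite expr0 mxE ler0n.
by rewrite !exprSr -!mulmxE; apply: mx_le0_mul.
Qed.

Lemma mx_le0_sum (m N : nat) (F G : nat -> 'M[R]_m) :
  (forall k, mx_le0 (F k) (G k)) ->
  mx_le0 (\sum_(k < N) F k) (\sum_(k < N.+1) G k).
Proof.
move=> FG; rewrite big_ord_recr /= -[\sum_(k < N) F k]addr0.
apply: mx_le0_add; last first.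
  by move=> a b; have /andP [F0 FG'] := FG N a b; rewrite mxE lexx (le_trans F0).
elim/big_ind2: _ => // [|X X' Y Y']; last exact: mx_le0_add.
by apply: mx_le0_refl => a b; rewrite mxE.
Qed.

Definition indicator_mx (m : nat) (U : {set 'I_m}) : 'M[R]_m :=
  diag_mx (\row_a ((a \in U)%:R : R)).

Lemma mul_indicator_mx (m p : nat) (X : 'M[R]_(p, m)) (U : {set 'I_m}) a b :
  (X *m indicator_mx U) a b = if b \in U then X a b else 0.
Proof. by rewrite mul_mx_diag !mxE; case: (b \in U); rewrite ?mulr1 ?mulr0. Qed.

Lemma indicator_mx_le0 (m : nat) (U V : {set 'I_m}) :
  U \subset V -> mx_le0 (indicator_mx U) (indicator_mx V).
Proof.
move=> /subsetP UV a b; rewrite !mxE; case: (a == b); rewrite ?mulr1n ?mulr0n ?lexx //.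
by case aU: (a \in U); rewrite ?(UV _ aU) ?ler01 ?lexx ?ler0n.
Qed.

Lemma mulmx3_norm_bound (m p q s : nat) (X : 'M[R]_(m, p)) (E : 'M[R]_(p, q))
    (Z : 'M[R]_(q, s)) (a : 'I_m) (b : 'I_s) (e : R) :
  (forall c d, `|E c d| <= e) ->
  `|(X *m (E *m Z)) a b| <= (\sum_c \sum_d `|X a c| * `|Z d b|) * e.
Proof.
move=> Ee; rewrite mxE mulr_suml; apply: le_trans (ler_norm_sum _ _ _) _.
apply: ler_sum => c _; rewrite mxE normrM mulr_suml.
apply: le_trans (ler_wpM2l (normr_ge0 _) (ler_norm_sum _ _ _)) _.
rewrite mulr_sumr; apply: ler_sum => d _.
by rewrite normrM -mulrA ler_wpM2l // mulrC ler_wpM2l.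
Qed.

Lemma vec_mul_pos (m : nat) (x : 'rV[R]_m) (Q : 'M[R]_m) (c b : 'I_m) :
  mx_nonneg x -> 0 < x 0 c -> (forall i j, 0 < Q i j) -> 0 < (x *m Q) 0 b.
Proof.
move=> x0 xc Q0; rewrite mxE (bigD1 c) //= ltr_wpDr ?mulr_gt0 //.
by rewrite sumr_ge0 // => a _; rewrite mulr_ge0 // ltW.
Qed.

End EntrywiseOrder.
Arguments indicator_mx {R m}.

Section PerronFrobenius.
Variables (C : archiClosedFieldType) (n : nat) (M : 'M[C]_n) (rho : C).
Hypothesis M0 : mx_nonneg M.
Hypothesis Mirr : irreducible M.
Hypothesis rho_bound : forall l, eigenvalue M l -> `|l| <= rho.
Hypothesis rho0 : 0 <= rho.

Lemma walk_pos (k : nat) (i j : 'I_n) : walk M k i j -> 0 < (M ^+ k) i j.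
Proof.
elim: k i j => [|k IH] i j /existsP [f /and3P [/eqP f0 /eqP fk /forallP fM]].
  have -> : j = i by rewrite -f0 -fk; congr (f _); apply/val_inj.
  by rewrite expr0 mxE eqxx ltr01.
set i1 := f (lift ord0 ord0).
have Mi : 0 < M i i1.
  by move: (fM ord0); rewrite -f0 (_ : widen_ord _ _ = ord0) //; apply/val_inj.
have walk1 : walk M k i1 j.
  apply/existsP; exists [ffun t : 'I_k.+1 => f (lift ord0 t)].
  rewrite !ffunE eqxx -fk (_ : lift ord0 ord_max = ord_max); last exact/val_inj.
  rewrite eqxx /=; apply/forallP => t; rewrite !ffunE.
  move: (fM (lift ord0 t)).
  by rewrite (_ : widen_ord _ _ = lift ord0 (widen_ord (leqnSn k) t)) //; apply/val_inj.
rewrite exprS -mulmxE mxE (sumr_gt0_term (i := i1)) // => [l|].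
  exact: mulr_ge0 (M0 _ _) (mx_nonneg_exp _ M0 _ _).
by rewrite mulr_gt0 // IH.
Qed.

Definition smoothing (N : nat) : 'M[C]_n := \sum_(k < N.+1) M ^+ k.

Lemma smoothing_pos : exists N, forall i j, 0 < smoothing N i j.
Proof.
pose len (p : 'I_n * 'I_n) := ex_minn (Mirr p.1 p.2).
exists (\max_p len p)%N => i j; rewrite /smoothing summxE.
have Nij : (len (i, j) < (\max_p len p).+1)%N by rewrite ltnS leq_bigmax.
rewrite (sumr_gt0_term (i := Ordinal Nij)) // => [k|].
  exact: mx_nonneg_exp k M0 i j.
by apply: walk_pos; rewrite /len /=; case: ex_minnP.
Qed.

Lemma smoothing_comm (N : nat) : smoothing N *m M = M *m smoothing N.
Proof.
rewrite /smoothing mulmxE mulr_suml mulr_sumr; apply: eq_bigr => k _.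
by rewrite -exprSr exprS.
Qed.

Lemma subinvariant_iter (y : 'rV[C]_n) (nu : C) :
  0 <= nu -> (forall b, nu * y 0 b <= (y *m M) 0 b) ->
  forall k b, nu ^+ k * y 0 b <= (y *m M ^+ k) 0 b.
Proof.
move=> nu0 Hy; elim=> [|k IH] b; first by rewrite expr0 mul1r mulmx1.
rewrite [M ^+ _]exprSr -mulmxE mulmxA [X in _ <= X]mxE.
apply: le_trans (_ : \sum_c nu ^+ k * y 0 c * M c b <= _); last first.
  by apply: ler_sum => c _; rewrite ler_wpM2r.
rewrite (eq_bigr (fun c => nu ^+ k * (y 0 c * M c b))); last by move=> c _; rewrite mulrA.
have := Hy b; rewrite mxE => Hb.
by rewrite -mulr_sumr exprSr -mulrA ler_wpM2l ?exprn_ge0.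
Qed.

(* Such a growth rate [nu] cannot exceed the spectral radius, since the powers
   of [M] grow at most like [r^k] for every [r > rho] ([power_bound]). *)
Lemma growth_le_rho (y : 'rV[C]_n) (r : 'I_n) (nu : C) :
  mx_nonneg y -> 0 < y 0 r -> 0 <= nu ->
  (forall b, nu * y 0 b <= (y *m M) 0 b) -> nu <= rho.
Proof.
move=> y0 yr nu0 Hy; rewrite real_leNgt ?ger0_real //; apply/negP => rho_nu.
set R := (rho + nu) / 2; have [rhoR Rnu] := midf_lt rho_nu.
have R0 : 0 < R := le_lt_trans rho0 rhoR.
have [K K0 HK] := power_bound (fun l hl => le_lt_trans (rho_bound hl) rhoR).
set S := \sum_c y 0 c; have S0 : 0 <= S by apply: sumr_ge0.
have upper k : nu ^+ k * y 0 r <= S * K * R ^+ k.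
  apply: le_trans (subinvariant_iter nu0 Hy k r) _.
  rewrite mxE /S -mulrA mulr_suml; apply: ler_sum => c _.
  rewrite ler_wpM2l //; apply: le_trans (HK k c r).
  exact: real_ler_norm (ger0_real (mx_nonneg_exp _ M0 _ _)).
have nuR : 1 < nu / R by rewrite ltr_pdivlMr // mul1r.
have [k] := expr_unbounded nuR (divr_ge0 (mulr_ge0 S0 K0) (ltW yr)).
rewrite ltr_pdivrMr // => Hk.
have : S * K * R ^+ k < nu ^+ k * y 0 r.
  rewrite (_ : nu ^+ k = (nu / R) ^+ k * R ^+ k); last first.
    by rewrite -exprMn divfK // lt0r_neq0.
  by rewrite [_ * R ^+ k * _]mulrAC ltr_pM2r // exprn_gt0.
by move=> h; have := lt_le_trans h (upper k); rewrite ltxx.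
Qed.

(* Smoothing
   by [sum_(k <= N) M^k] makes [x] positive and, unless [x] is an eigenvector
   (impossible, as it vanishes somewhere), improves [mu] to some [mu + d]. *)
Lemma subinvariant_lt_rho (x : 'rV[C]_n) (c r : 'I_n) (mu : C) :
  mx_nonneg x -> 0 < x 0 c -> x 0 r = 0 -> 0 <= mu ->
  (forall b, mu * x 0 b <= (x *m M) 0 b) -> mu < rho.
Proof.
move=> x0 xc xr mu0 Hx; have [N QN] := smoothing_pos; set Q := smoothing N.
have ypos b : 0 < (x *m Q) 0 b := vec_mul_pos b x0 xc QN.
set z := x *m M - mu *: x.
have z0 : mx_nonneg z.
  by move=> a b; rewrite (ord1 a) mxE [X in _ + X]mxE [X in _ - X]mxE subr_ge0.
have [zeq|/nonzero_entry [c' zc']] := eqVneq z 0.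
  have xM : x *m M = mu *: x by apply/eqP; rewrite -subr_eq0 -/z zeq.
  have xMk k : x *m M ^+ k = mu ^+ k *: x.
    elim: k => [|k IH]; first by rewrite expr0 scale1r mulmx1.
    by rewrite exprSr -mulmxE mulmxA IH -scalemxAl xM scalerA -exprSr.
  suff : (x *m Q) 0 r = 0 by move: (ypos r) => /[swap] ->; rewrite ltxx.
  by rewrite mulmx_sumr summxE big1 // => k _; rewrite xMk mxE xr mulr0.
have wpos b : 0 < (z *m Q) 0 b.
  by apply: (vec_mul_pos (c := c') b z0 _ QN); rewrite lt_def zc' z0.
have yM : x *m Q *m M = z *m Q + mu *: (x *m Q).
  by rewrite -mulmxA smoothing_comm mulmxA mulmxBl -scalemxAl subrK.
have [d d0 Hd] := @pos_ratio_bound _ _ (fun b => (x *m Q) 0 b) (fun b => (z *m Q) 0 b)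
  (fun b => ltW (ypos b)) wpos.
have : mu + d <= rho.
  apply: (@growth_le_rho (x *m Q) c).
  - by move=> a b; rewrite (ord1 a) ltW.
  - exact: ypos.
  - by rewrite addr_ge0 // ltW.
  - move=> b; rewrite yM [leRHS]mxE [X in _ <= _ + X]mxE mulrDl [leLHS]addrC.
    by rewrite lerD2r Hd.
by apply: lt_le_trans; rewrite ltrDl.
Qed.

(* Every eigenvalue of a proper principal submatrix of [M] lies strictly
   inside the disc of radius [rho]: the modulus of an eigenvector, extended by
   zero, is subinvariant for [M] and vanishes outside [T]. *)
Lemma principal_submatrix_spectrum (T : {set 'I_n}) (i : 'I_n) (l : C) :
  i \notin T -> eigenvalue (subM M T T) l -> `|l| < rho.
Proof.
move=> iT /eigenvalueP [v vA /nonzero_entry [a0 va0]].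
have Ta0 := enum_valP a0; set rk := enum_rank_in Ta0.
pose x := \row_c (if c \in T then `|v 0 (rk c)| else 0).
have xT c : c \in T -> x 0 c = `|v 0 (rk c)| by move=> cT; rewrite mxE cT.
have xTc c : c \notin T -> x 0 c = 0 by move=> cT; rewrite mxE (negbTE cT).
have xM b : (x *m M) 0 b = \sum_a `|v 0 a| * M (enum_val a) b.
  rewrite mxE (eq_bigr (fun c => if c \in T then `|v 0 (rk c)| * M c b else 0)).
    by rewrite -big_mkcond big_enum_val /=; apply: eq_bigr => a _; rewrite /rk enum_valK_in.
  by move=> c _; rewrite mxE; case: ifP => _ //; rewrite mul0r.
apply: (@subinvariant_lt_rho x (enum_val a0) i).
- by move=> ? c; rewrite mxE; case: ifP.
- by rewrite xT // /rk enum_valK_in normr_gt0.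
- exact: xTc.
- exact: normr_ge0.
move=> b; have [bT|bT] := boolP (b \in T); last first.
  by rewrite xTc // mulr0 xM sumr_ge0 // => a _; rewrite mulr_ge0.
rewrite xT // xM -normrM.
have <- : (v *m subM M T T) 0 (rk b) = l * v 0 (rk b) by rewrite vA mxE.
rewrite mxE; apply: le_trans (ler_norm_sum _ _ _) _; apply: ler_sum => a _.
by rewrite normrM mxE /rk (enum_rankK_in Ta0 bT) (ger0_norm (M0 _ _)).
Qed.

(* For [n >= 2] the spectral radius is positive: the indicator of one vertex
   is subinvariant with factor 0 and vanishes at another vertex. *)
Lemma rho_pos : (2 <= n)%N -> 0 < rho.
Proof.
move=> n2; have n0 : (0 < n)%N by apply: leq_trans n2.
pose c := Ordinal n0; pose x := \row_b ((b == c)%:R : C).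
apply: (@subinvariant_lt_rho x c (Ordinal n2)) => //.
- by move=> ? b; rewrite mxE ler0n.
- by rewrite mxE eqxx ltr01.
- by rewrite mxE.
- by move=> b; rewrite mul0r mxE sumr_ge0 // => a _; rewrite mxE mulr_ge0 ?ler0n.
Qed.

End PerronFrobenius.

Section StepApproximation.
Variables (C : archiClosedFieldType) (n : nat) (M : 'M[C]_n) (rho : C).

Lemma dist_le (a b : 'I_n) : (dist M a b <= n)%N.
Proof.
by rewrite /dist; have := find_size (fun k => walk M k a b) (iota 0 n); rewrite size_iota.
Qed.

Lemma Gamma_full (l : nat) (i j : 'I_n) : (2 * n <= l)%N -> Gamma M l i j = setT.
Proof.
move=> nl; apply/setP => k; rewrite !inE.
have d2 a b c : (dist M a b + dist M b c <= l)%N.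
  by apply: leq_trans nl; rewrite mul2n -addnn leq_add ?dist_le.
by rewrite !d2.
Qed.

Hypothesis rho_gt0 : 0 < rho.

Lemma iso_l_eventually (i j : 'I_n) (l : nat) :
  (subM M (~: [set i; j]) (~: [set i; j]) - rho%:M) \in unitmx -> (2 * n <= l)%N ->
  iso_l M rho l i j = iso M rho [set i; j] + subM M [set i; j] (~: [set i; j]) *m
    ((rho^-1 *: subM M (~: [set i; j]) (~: [set i; j])) ^+ l.+1 *m
     (invmx (subM M (~: [set i; j]) (~: [set i; j]) - rho%:M) *m
      subM M (~: [set i; j]) [set i; j])).
Proof.
move=> uA nl; rewrite /iso_l (Gamma_full i j nl) setTD scalemxAl scalemxAr.
rewrite (neumann_partial_sum _ rho_gt0 uA) /iso mulmxBl mul1mx mulmxBr mulmxBl !mulmxA.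
by rewrite [_ - _ *m _ *m _]addrC addrA.
Qed.

Hypothesis M0 : mx_nonneg M.
Hypothesis Mirr : irreducible M.
Hypothesis rho_bound : forall l, eigenvalue M l -> `|l| <= rho.

(* Each entry of [I^l_{ij}(M)] converges to the corresponding entry of
   [I_{ij}(M)]: the difference is bounded by a geometric sequence because the
   complementary principal submatrix has spectrum strictly inside [rho]. *)
Lemma iso_l_converges (i j a b : 'I_n) (Ha : a \in [set i; j]) (Hb : b \in [set i; j]) :
  converges (fun l => at2 Ha Hb (iso_l M rho l i j)) (at2 Ha Hb (iso M rho [set i; j])).
Proof.
set S := [set i; j]; set A := subM M (~: S) (~: S).
have Heig l : eigenvalue A l -> `|l| < rho.
  apply: (principal_submatrix_spectrum M0 Mirr rho_bound (ltW rho_gt0) (i := i)).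
  by rewrite inE negbK set21.
have uA : (A - rho%:M) \in unitmx.
  rewrite -row_free_unit -kermx_eq0; apply: contraT => rho_eig.
  by have := Heig rho rho_eig; rewrite gtr0_norm // ltxx.
have [K [q [K0 q0 q1 HK]]] := scaled_power_decay rho_gt0 Heig.
set X := subM M S (~: S); set Z := invmx (A - rho%:M) *m subM M (~: S) S.
pose a' := enum_rank_in Ha a; pose b' := enum_rank_in Hb b.
set c0 := \sum_c \sum_d `|X a' c| * `|Z d b'|.
have c00 : 0 <= c0 by do 2![apply: sumr_ge0 => ? _]; rewrite mulr_ge0.
apply: (@converges_geometric _ _ _ (c0 * K) q (2 * n)) => // [|l nl].
  exact: mulr_ge0.
rewrite (iso_l_eventually uA nl) /at2 mxE addrC addrK.
apply: le_trans (mulmx3_norm_bound _ _ _ _ (fun c d => HK l.+1 c d)) _.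
by rewrite mulrA ler_wpM2l ?mulr_ge0 // exprSr ler_piMr ?exprn_ge0 // ltW.
Qed.

End StepApproximation.

Section Monotonicity.
Variables (C : archiClosedFieldType) (n : nat).
Implicit Types (X Y : 'M[C]_n) (S T U : {set 'I_n}).

Lemma subM_mul X Y S U T :
  subM X S U *m subM Y U T = subM (X *m indicator_mx U *m Y) S T.
Proof.
apply/matrixP => a b; rewrite !mxE.
under [RHS]eq_bigr => c _ do rewrite mul_indicator_mx (fun_if (fun x => x * _)) mul0r.
rewrite -big_mkcond [RHS]big_enum_val /=.
by apply: eq_bigr => c _; rewrite !mxE.
Qed.

Lemma subM_exp X U k :
  subM X U U ^+ k = subM ((X *m indicator_mx U) ^+ k) U U.
Proof.
elim: k => [|k IH]; last by rewrite !exprS IH -mulmxE subM_mul.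
by apply/matrixP => a b; rewrite !mxE (inj_eq enum_val_inj).
Qed.

Lemma subM_scale (c : C) X S T : c *: subM X S T = subM (c *: X) S T.
Proof. by apply/matrixP => a b; rewrite !mxE. Qed.

Lemma subM_add X Y S T : subM X S T + subM Y S T = subM (X + Y) S T.
Proof. by apply/matrixP => a b; rewrite !mxE. Qed.

Lemma subM_sum (N : nat) (F : nat -> 'M[C]_n) S T :
  \sum_(k < N) subM (F k) S T = subM (\sum_(k < N) F k) S T.
Proof. by apply/matrixP => a b; rewrite !mxE !summxE; apply: eq_bigr => k _; rewrite mxE. Qed.

Definition approx_full (M : 'M[C]_n) (rho : C) (U : {set 'I_n}) (l : nat) : 'M[C]_n :=
  M + rho^-1 *: (M *m indicator_mx U *m
                   (\sum_(k < l.+1) (rho^-1 *: M *m indicator_mx U) ^+ k) *m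
                 indicator_mx U *m M).

Lemma iso_l_entry (M : 'M[C]_n) (rho : C) (l : nat) (i j a b : 'I_n)
    (Ha : a \in [set i; j]) (Hb : b \in [set i; j]) :
  at2 Ha Hb (iso_l M rho l i j) =
  approx_full M rho (Gamma M l i j :\: [set i; j]) l a b.
Proof.
rewrite /at2 /iso_l.
under eq_bigr do rewrite subM_scale subM_exp.
by rewrite subM_sum !subM_mul subM_scale subM_add mxE !enum_rankK_in.
Qed.

Lemma approx_full_mono (M : 'M[C]_n) (rho : C) (U V : {set 'I_n}) (l : nat) :
  mx_nonneg M -> 0 <= rho -> U \subset V ->
  mx_le0 (approx_full M rho U l) (approx_full M rho V l.+1).
Proof.
move=> M0 rho0 UV; have rhoV0 : 0 <= rho^-1 by rewrite invr_ge0.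
have MM := mx_le0_refl M0; have PUV := indicator_mx_le0 C UV.
have NUV : mx_le0 (rho^-1 *: M *m indicator_mx U) (rho^-1 *: M *m indicator_mx V).
  by apply: mx_le0_mul => //; apply: mx_le0_scale.
apply: mx_le0_add => //; apply: mx_le0_scale => //.
apply: (mx_le0_mul _ MM); apply: (mx_le0_mul _ PUV).
apply: (mx_le0_mul (mx_le0_mul MM PUV)).
by apply: mx_le0_sum => k; apply: mx_le0_exp.
Qed.

Lemma Gamma_mono (M : 'M[C]_n) (l : nat) (i j : 'I_n) :
  Gamma M l i j \subset Gamma M l.+1 i j.
Proof.
apply/subsetP => k; rewrite !inE => /orP [/andP [h1 h2]|->]; last by rewrite orbT.
by rewrite (leq_trans h1 (leqnSn _)) (leq_trans h2 (leqnSn _)).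
Qed.

Lemma iso_l_mono (M : 'M[C]_n) (rho : C) (l : nat) (i j a b : 'I_n)
    (Ha : a \in [set i; j]) (Hb : b \in [set i; j]) :
  mx_nonneg M -> 0 <= rho ->
  at2 Ha Hb (iso_l M rho l i j) <= at2 Ha Hb (iso_l M rho l.+1 i j).
Proof.
move=> M0 rho0; rewrite !iso_l_entry.
have := approx_full_mono l M0 rho0 (setSD [set i; j] (Gamma_mono M l i j)) a b.
by case/andP.
Qed.

End Monotonicity.

Theorem theorem2 (C : archiClosedFieldType) (n : nat) (M : 'M[C]_n) (rho : C) :
  (3 <= n)%N ->
  (forall i j, 0 <= M i j) ->
  irreducible M ->
  spectral_radius M rho ->
  (forall (i j : 'I_n) (eps : C), 0 < eps ->
     exists L : nat, forall l : nat, (L <= l)%N ->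
       `|eff_l M rho l i j - eff M rho i j| < eps)
  /\
  (forall l : nat, (1 <= l)%N -> forall i j : 'I_n,
     eff_l M rho l i j <= eff_l M rho l.+1 i j).
Proof.
move=> n3 M0 Mirr [[l0 _ l0rho] rho_bound].
have rho0 : 0 <= rho by rewrite -l0rho normr_ge0.
have rho_gt0 : 0 < rho := rho_pos M0 Mirr rho_bound rho0 (ltnW n3).
have entry_conv := iso_l_converges rho_gt0 M0 Mirr rho_bound.
split=> [i j|l _ i j].
  suff : converges (fun l => eff_l M rho l i j) (eff M rho i j) by [].
  apply: (@converges_eq _ _ (fun l => if i == j then
      \sum_(k | k != i) at2 (set21 i k) (set21 i k) (iso_l M rho l i k)
    else at2 (set21 i j) (set22 i j) (iso_l M rho l i j))) => [l|].
    by rewrite mxE.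
  rewrite /eff mxE; case: (i == j); last exact: entry_conv.
  by apply: converges_sum => k _; apply: entry_conv.
have mono i' j' a b (Ha : a \in [set i'; j']) (Hb : b \in [set i'; j']) :=
  iso_l_mono l Ha Hb M0 rho0.
rewrite !mxE; case: (i == j); last exact: mono.
by apply: ler_sum => k _; apply: mono.
Qed.
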